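(* Let $\varphi : X\to X$ be a morphism in $\mathscr{C}$ with kernel $\kappa : K\to X$ and cokernel $\lambda : X\to L$. Then $\varphi$ has a core inverse if and only if $\varphi$ is regular and both $\kappa\lambda : K\to L$ and $\kappa\kappa^{*} : K\to K$ are invertible. In this case, for every $\psi : X\to X$ with $\varphi\psi\varphi=\varphi$, $$\varphi^{\mathrm{core}}=[1_X-\lambda(\kappa\lambda)^{-1}\kappa]\,\psi\,[1_X-\kappa^{*}(\kappa\kappa^{*})^{-1}\kappa].$$
   Context: $\mathscr{C}$ is an additive category with an involution $*$: a map on morphisms sending $\varphi : X\to Y$ to $\varphi^* : Y \to X$ such that $(\varphi^* )^*=\varphi$, $(\varphi\psi)^*=\psi^*\varphi^*$ and $(\varphi+\phi)^*=\varphi^*+\phi^*$. Composition is written left to right: for $\varphi : X\to Y$ and $\psi : Y\to Z$, $\varphi\psi : X \to Z$ means ''first $\varphi$, then $\psi$''. A kernel of $\varphi : X\to Y$ is a morphism $\kappa : K\to X$ with $\kappa\varphi=0$ such that every $\alpha : M\to X$ with $\alpha\varphi=0$ factors uniquely as $\alpha=\alpha'\kappa$. A cokernel of $\varphi$ is a morphism $\lambda : Y\to L$ with $\varphi\lambda=0$ such that every $\beta : Y\to M$ with $\varphi\beta=0$ factors uniquely as $\beta=\lambda\beta'$. $\varphi$ is regular if there is $\chi$ with $\varphi\chi\varphi=\varphi$. A morphism is invertible if it has a two-sided inverse. For $\varphi : X\to X$, a core inverse of $\varphi$ is a morphism $\chi : X\to X$ with $(\varphi\chi)^*=\varphi\chi$,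 $\varphi\chi^2=\chi$ and $\chi\varphi^2=\varphi$. It is unique when it exists and is denoted $\varphi^{\mathrm{core}}$. *)

From HB Require Import structures.
From mathcomp Require Import all_boot all_algebra.
Set Implicit Arguments. Unset Strict Implicit. Unset Printing Implicit Defensive.
Import GRing.Theory.
Local Open Scope ring_scope.

(* An additive category with involution.  Composition is written in
   diagrammatic (left-to-right) order: [mcomp f g] = "first f, then g". *)
Record AddCatInv := {
  Obj : Type;
  Mor : Obj -> Obj -> zmodType;
  idmor : forall X, Mor X X;
  mcomp : forall X Y Z, Mor X Y -> Mor Y Z -> Mor X Z;
  compA : forall X Y Z W (f : Mor X Y) (g : Mor Y Z) (h : Mor Z W),
      mcomp (mcomp f g) h = mcomp f (mcomp g h);
  comp1m : forall X Y (f : Mor X Y), mcomp (idmor X) f = f;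
  compm1 : forall X Y (f : Mor X Y), mcomp f (idmor Y) = f;
  compDl : forall X Y Z (f g : Mor X Y) (h : Mor Y Z),
      mcomp (f + g) h = mcomp f h + mcomp g h;
  compDr : forall X Y Z (f : Mor X Y) (g h : Mor Y Z),
      mcomp f (g + h) = mcomp f g + mcomp f h;
  zero_obj : exists Z : Obj, forall X,
      (forall f : Mor X Z, f = 0) /\ (forall f : Mor Z X, f = 0);
  biprod : forall X Y, exists (P : Obj) (i1 : Mor X P) (i2 : Mor Y P)
      (p1 : Mor P X) (p2 : Mor P Y),
      [/\ mcomp i1 p1 = idmor X, mcomp i2 p2 = idmor Y, mcomp i1 p2 = 0,
          mcomp i2 p1 = 0 & mcomp p1 i1 + mcomp p2 i2 = idmor P];
  mstar : forall X Y, Mor X Y -> Mor Y X;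
  starK : forall X Y (f : Mor X Y), mstar (mstar f) = f;
  star_comp : forall X Y Z (f : Mor X Y) (g : Mor Y Z),
      mstar (mcomp f g) = mcomp (mstar g) (mstar f);
  starD : forall X Y (f g : Mor X Y), mstar (f + g) = mstar f + mstar g
}.

Arguments idmor {a} X.
Arguments mcomp {a X Y Z}.
Arguments mstar {a X Y}.

Section Defs.
Variable C : AddCatInv.

Definition is_kernel (X Y K : Obj C) (phi : Mor X Y) (kappa : Mor K X) : Prop :=
  mcomp kappa phi = 0 /\
  forall (M : Obj C) (alpha : Mor M X), mcomp alpha phi = 0 ->
    exists! alpha' : Mor M K, alpha = mcomp alpha' kappa.

Definition is_cokernel (X Y L : Obj C) (phi : Mor X Y) (lambda : Mor Y L) : Prop :=
  mcomp phi lambda = 0 /\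
  forall (M : Obj C) (beta : Mor Y M), mcomp phi beta = 0 ->
    exists! beta' : Mor L M, beta = mcomp lambda beta'.

Definition regular (X Y : Obj C) (phi : Mor X Y) : Prop :=
  exists chi : Mor Y X, mcomp (mcomp phi chi) phi = phi.

Definition is_inverse (X Y : Obj C) (f : Mor X Y) (g : Mor Y X) : Prop :=
  mcomp f g = idmor X /\ mcomp g f = idmor Y.

Definition invertible (X Y : Obj C) (f : Mor X Y) : Prop :=
  exists g : Mor Y X, is_inverse f g.

Definition is_core_inverse (X : Obj C) (phi chi : Mor X X) : Prop :=
  [/\ mstar (mcomp phi chi) = mcomp phi chi,
      mcomp phi (mcomp chi chi) = chi &
      mcomp chi (mcomp phi phi) = phi].

Definition has_core_inverse (X : Obj C) (phi : Mor X X) : Prop :=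
  exists chi, is_core_inverse phi chi.

End Defs.

From Pilot Require Import Defs.
From HB Require Import structures.
From mathcomp Require Import all_boot all_algebra.
Import GRing.Theory.
Local Open Scope ring_scope.

(* The kernel κ and cokernel λ of φ split the idempotents 1 - χφ and 1 - φχ
   built from a core inverse χ.  An idempotent split on both sides gives an
   inverse of κλ, and the self-adjoint one 1 - φχ = cκ = κ* c* gives an inverse
   of κκ*.  Conversely P := 1 - λ (κλ)⁻¹ κ and Q := 1 - κ* (κκ* )⁻¹ κ are
   idempotents killed by κ on the left, with Pλ = 0 and Q self-adjoint;
   sandwiching an inner inverse ψ between them gives φ(PψQ) = Q and
   (PψQ)φ = P, from which the core inverse axioms follow at once. *)

Local Notation "f ⋅ g" := (mcomp f g) (at level 40, left associativity).
(* [compA] alone refers to ssrfun's associativity of function composition. *)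
Local Notation mcompA := Defs.compA.

Section AdditiveMaps.
Variables (U V : zmodType) (f : U -> V).
Hypothesis fD : {morph f : x y / x + y}.

Lemma additive_map0 : f 0 = 0.
Proof. by apply: (@addrI _ (f 0)); rewrite -fD !addr0. Qed.

Lemma additive_mapB : {morph f : x y / x - y}.
Proof.
have fN x : f (- x) = - f x.
  by apply: (@addrI _ (f x)); rewrite -fD !subrr additive_map0.
by move=> x y; rewrite fD fN.
Qed.

End AdditiveMaps.

Section AdditiveCategory.
Context {C : AddCatInv}.

Lemma comp0m {X Y Z : Obj C} (f : Mor Y Z) : (0 : Mor X Y) ⋅ f = 0.
Proof. exact: (@additive_map0 _ _ (mcomp^~ f) (fun g h => compDl g h f)). Qed.

Lemma compm0 {X Y Z : Obj C} (f : Mor X Y) : f ⋅ (0 : Mor Y Z) = 0.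
Proof. exact: (@additive_map0 _ _ (mcomp f) (compDr f)). Qed.

Lemma compBl {X Y Z : Obj C} (f g : Mor X Y) (h : Mor Y Z) :
  (f - g) ⋅ h = f ⋅ h - g ⋅ h.
Proof. exact: (@additive_mapB _ _ (mcomp^~ h) (fun f g => compDl f g h)). Qed.

Lemma compBr {X Y Z : Obj C} (f : Mor X Y) (g h : Mor Y Z) :
  f ⋅ (g - h) = f ⋅ g - f ⋅ h.
Proof. exact: (@additive_mapB _ _ (mcomp f) (compDr f)). Qed.

Lemma starB {X Y : Obj C} (f g : Mor X Y) : mstar (f - g) = mstar f - mstar g.
Proof. exact: (@additive_mapB _ _ mstar (@starD C X Y)). Qed.

Lemma star1 (X : Obj C) : mstar (idmor X) = idmor X.
Proof.
by have := star_comp (mstar (idmor X)) (idmor X); rewrite compm1 starK compm1 => <-.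
Qed.

Lemma star_self_adjoint_inverse {X : Obj C} (g h : Mor X X) :
  mstar g = g -> is_inverse g h -> mstar h = h.
Proof.
move=> gs [gh hg].
have hsg : mstar h ⋅ g = idmor X by rewrite -gs -star_comp gh star1.
by rewrite -[mstar h]compm1 -gh -mcompA hsg comp1m.
Qed.

(* [a k = l b] is an idempotent split through the source of [k] and through
   the target of [l]. *)
Lemma inverse_of_common_splitting {X Y Z : Obj C} (k : Mor Y X) (l : Mor X Z)
    (a : Mor X Y) (b : Mor Z X) :
  k ⋅ a = idmor Y -> b ⋅ l = idmor Z -> a ⋅ k = l ⋅ b ->
  is_inverse (k ⋅ l) (b ⋅ a).
Proof.
move=> ka bl akl; split.
- by rewrite mcompA -(mcompA l) -akl mcompA -mcompA ka comp1m.
- by rewrite mcompA -(mcompA a) akl mcompA -mcompA bl comp1m.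
Qed.

End AdditiveCategory.

Section KernelCokernel.
Context {C : AddCatInv} {X Y K L : Obj C}.
Context {phi : Mor X Y} {kappa : Mor K X} {lambda : Mor Y L}.
Hypotheses (kerk : is_kernel phi kappa) (cokl : is_cokernel phi lambda).

Lemma kernel_monic {M : Obj C} (f g : Mor M K) : f ⋅ kappa = g ⋅ kappa -> f = g.
Proof.
have [k0 kuniv] := kerk; move=> fgk.
have [|h [_ huniq]] := kuniv M (g ⋅ kappa); first by rewrite mcompA k0 compm0.
by rewrite -(huniq f) // (huniq g).
Qed.

Lemma kernel_factor {M : Obj C} (f : Mor M X) :
  f ⋅ phi = 0 -> exists g, f = g ⋅ kappa.
Proof. by have [_ kuniv] := kerk; move=> /kuniv[g [fg _]]; exists g. Qed.

Lemma kernel_retraction {e : Mor X X} :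
  e ⋅ phi = 0 -> kappa ⋅ e = kappa ->
  exists2 a, e = a ⋅ kappa & kappa ⋅ a = idmor K.
Proof.
move=> /kernel_factor[a ea] ke; exists a => //.
by apply: kernel_monic; rewrite mcompA -ea ke comp1m.
Qed.

Lemma cokernel_epi {M : Obj C} (f g : Mor L M) : lambda ⋅ f = lambda ⋅ g -> f = g.
Proof.
have [l0 luniv] := cokl; move=> fgl.
have [|h [_ huniq]] := luniv M (lambda ⋅ g); first by rewrite -mcompA l0 comp0m.
by rewrite -(huniq f) // (huniq g).
Qed.

Lemma cokernel_factor {M : Obj C} (f : Mor Y M) :
  phi ⋅ f = 0 -> exists g, f = lambda ⋅ g.
Proof. by have [_ luniv] := cokl; move=> /luniv[g [fg _]]; exists g. Qed.

Lemma cokernel_section {e : Mor Y Y} :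
  phi ⋅ e = 0 -> e ⋅ lambda = lambda ->
  exists2 b, e = lambda ⋅ b & b ⋅ lambda = idmor L.
Proof.
move=> /cokernel_factor[b eb] el; exists b => //.
by apply: cokernel_epi; rewrite -mcompA -eb el compm1.
Qed.

Lemma inner_inverse_lfix {psi : Mor Y X} {M : Obj C} {f : Mor X M} :
  phi ⋅ psi ⋅ phi = phi -> kappa ⋅ f = 0 -> phi ⋅ psi ⋅ f = f.
Proof.
move=> hpsi kf; have [|d ed] := kernel_factor (idmor X - phi ⋅ psi).
  by rewrite compBl comp1m hpsi subrr.
have -> : phi ⋅ psi = idmor X - d ⋅ kappa by rewrite -ed opprB addrC subrK.
by rewrite compBl comp1m mcompA kf compm0 subr0.
Qed.

Lemma inner_inverse_rfix {psi : Mor Y X} {M : Obj C} {g : Mor M Y} :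
  phi ⋅ psi ⋅ phi = phi -> g ⋅ lambda = 0 -> g ⋅ psi ⋅ phi = g.
Proof.
move=> hpsi gl; have [|e ee] := cokernel_factor (idmor Y - psi ⋅ phi).
  by rewrite compBr compm1 -mcompA hpsi subrr.
rewrite mcompA; have -> : psi ⋅ phi = idmor Y - lambda ⋅ e.
  by rewrite -ee opprB addrC subrK.
by rewrite compBr compm1 -mcompA gl comp0m subr0.
Qed.

End KernelCokernel.

Section CoreInverse.
Context {C : AddCatInv} {X : Obj C} {phi chi : Mor X X}.
Hypothesis hchi : is_core_inverse phi chi.

Lemma core_inverse_inner : phi ⋅ chi ⋅ phi = phi.
Proof.
have [_ phichi2 chiphi2] := hchi.
by rewrite -{2}chiphi2 !mcompA -(mcompA chi chi) -mcompA phichi2 chiphi2.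
Qed.

Lemma core_inverse_comp_eq0 {M : Obj C} {k : Mor M X} :
  k ⋅ phi = 0 -> k ⋅ (chi ⋅ phi) = 0.
Proof.
by have [_ phichi2 _] := hchi; rewrite -phichi2 -!mcompA => ->; rewrite !comp0m.
Qed.

End CoreInverse.

Section ComplementaryProjection.
Context {C : AddCatInv} {X K L : Obj C} (kappa : Mor K X) (lambda : Mor X L).

(* For [u] the inverse of [kappa lambda] this is the idempotent
   [1 - lambda (kappa lambda)^-1 kappa] of the theorem. *)
Definition compl_proj (u : Mor L K) : Mor X X := idmor X - lambda ⋅ (u ⋅ kappa).

Lemma comp_compl_proj_eq0 (u : Mor L K) :
  kappa ⋅ lambda ⋅ u = idmor K -> kappa ⋅ compl_proj u = 0.
Proof. by move=> ku; rewrite compBr compm1 -!mcompA ku comp1m subrr. Qed.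

Lemma compl_proj_comp_eq0 (u : Mor L K) :
  u ⋅ (kappa ⋅ lambda) = idmor L -> compl_proj u ⋅ lambda = 0.
Proof. by move=> uk; rewrite compBl comp1m !mcompA uk compm1 subrr. Qed.

Lemma comp_compl_proj (u : Mor L K) {M : Obj C} (f : Mor M X) :
  f ⋅ lambda = 0 -> f ⋅ compl_proj u = f.
Proof. by move=> fl; rewrite compBr compm1 -mcompA fl comp0m subr0. Qed.

Lemma compl_proj_comp (u : Mor L K) {M : Obj C} (f : Mor X M) :
  kappa ⋅ f = 0 -> compl_proj u ⋅ f = f.
Proof. by move=> kf; rewrite compBl comp1m !mcompA kf !compm0 subr0. Qed.

End ComplementaryProjection.

Lemma star_compl_proj {C : AddCatInv} {X K : Obj C} (kappa : Mor K X) (v : Mor K K) :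
  is_inverse (kappa ⋅ mstar kappa) v ->
  mstar (compl_proj kappa (mstar kappa) v) = compl_proj kappa (mstar kappa) v.
Proof.
move=> hv; have vs : mstar v = v.
  by apply: star_self_adjoint_inverse hv; rewrite star_comp starK.
by rewrite /compl_proj starB star1 !star_comp starK vs mcompA.
Qed.

Section CoreInvertibility.
Context {C : AddCatInv} {X K L : Obj C}.
Context {phi : Mor X X} {kappa : Mor K X} {lambda : Mor X L}.
Hypotheses (kerk : is_kernel phi kappa) (cokl : is_cokernel phi lambda).

Let kappa_phi : kappa ⋅ phi = 0. Proof. by case: kerk. Qed.
Let phi_lambda : phi ⋅ lambda = 0. Proof. by case: cokl. Qed.

Lemma core_invertible_kernel_cokernel {chi : Mor X X} :
  is_core_inverse phi chi -> invertible (kappa ⋅ lambda).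
Proof.
move=> hchi; have [_ _ chiphi2] := hchi.
have E_phi : (idmor X - chi ⋅ phi) ⋅ phi = 0.
  by rewrite compBl comp1m mcompA chiphi2 subrr.
have kappa_E : kappa ⋅ (idmor X - chi ⋅ phi) = kappa.
  by rewrite compBr compm1 (core_inverse_comp_eq0 hchi kappa_phi) subr0.
have phi_E : phi ⋅ (idmor X - chi ⋅ phi) = 0.
  by rewrite compBr compm1 -mcompA (core_inverse_inner hchi) subrr.
have E_lambda : (idmor X - chi ⋅ phi) ⋅ lambda = lambda.
  by rewrite compBl comp1m mcompA phi_lambda compm0 subr0.
have [a ea ka] := kernel_retraction kerk E_phi kappa_E.
have [b eb bl] := cokernel_section cokl phi_E E_lambda.
by exists (b ⋅ a); apply: inverse_of_common_splitting; rewrite // -ea.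
Qed.

Lemma core_invertible_kernel_star {chi : Mor X X} :
  is_core_inverse phi chi -> invertible (kappa ⋅ mstar kappa).
Proof.
move=> hchi; have [phichi_star _ _] := hchi.
have F_phi : (idmor X - phi ⋅ chi) ⋅ phi = 0.
  by rewrite compBl comp1m (core_inverse_inner hchi) subrr.
have kappa_F : kappa ⋅ (idmor X - phi ⋅ chi) = kappa.
  by rewrite compBr compm1 -mcompA kappa_phi comp0m subr0.
have [c ec kc] := kernel_retraction kerk F_phi kappa_F.
exists (mstar c ⋅ c); apply: inverse_of_common_splitting => //.
- by rewrite -star_comp kc star1.
- by rewrite -star_comp -ec starB star1 phichi_star.
Qed.

Lemma core_inverse_sandwich (psi : Mor X X) :
  phi ⋅ psi ⋅ phi = phi -> forall (u : Mor L K) (v : Mor K K),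
  is_inverse (kappa ⋅ lambda) u -> is_inverse (kappa ⋅ mstar kappa) v ->
  is_core_inverse phi
    (compl_proj kappa lambda u ⋅ psi ⋅ compl_proj kappa (mstar kappa) v).
Proof.
move=> hpsi u v hu hv; have [ku uk] := hu; have [kv _] := hv.
set P := compl_proj kappa lambda u; set Q := compl_proj kappa (mstar kappa) v.
have kP : kappa ⋅ P = 0 by exact: comp_compl_proj_eq0.
have kQ : kappa ⋅ Q = 0 by exact: comp_compl_proj_eq0.
have Plambda : P ⋅ lambda = 0 by exact: compl_proj_comp_eq0.
have phi_chi : phi ⋅ (P ⋅ psi ⋅ Q) = Q.
  rewrite -!mcompA (comp_compl_proj _ lambda) //.
  exact: (inner_inverse_lfix kerk hpsi kQ).
have chi_phi : P ⋅ psi ⋅ Q ⋅ phi = P.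
  rewrite mcompA (compl_proj_comp _ (mstar kappa)) //.
  exact: (inner_inverse_rfix cokl hpsi Plambda).
split.
- by rewrite phi_chi star_compl_proj.
- by rewrite -mcompA phi_chi -!mcompA (compl_proj_comp _ (mstar kappa)).
- by rewrite -mcompA chi_phi compl_proj_comp.
Qed.

End CoreInvertibility.

Theorem theorem3p3 (C : AddCatInv) (X K L : Obj C) (phi : Mor X X)
    (kappa : Mor K X) (lambda : Mor X L) :
  is_kernel phi kappa -> is_cokernel phi lambda ->
  (has_core_inverse phi <->
     [/\ regular phi, invertible (mcomp kappa lambda)
       & invertible (mcomp kappa (mstar kappa))]) /\
  (has_core_inverse phi ->
   forall (psi : Mor X X), mcomp (mcomp phi psi) phi = phi ->
   forall (u : Mor L K) (v : Mor K K),
     is_inverse (mcomp kappa lambda) u ->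
     is_inverse (mcomp kappa (mstar kappa)) v ->
     is_core_inverse phi
       (mcomp (mcomp (idmor X - mcomp lambda (mcomp u kappa)) psi)
             (idmor X - mcomp (mstar kappa) (mcomp v kappa)))).
Proof.
move=> kerk cokl.
have formula := core_inverse_sandwich kerk cokl.
split; last by move=> _; exact: formula.
split.
- move=> [chi hchi]; split.
  + by exists chi; exact: core_inverse_inner hchi.
  + exact: (core_invertible_kernel_cokernel kerk cokl hchi).
  + exact: (core_invertible_kernel_star kerk hchi).
- move=> [[psi hpsi] [u hu] [v hv]].
  by eexists; exact: (formula psi hpsi u v hu hv).
Qed.
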